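(* Let $m\ge 2$ be an integer and let $F\subseteq\mathbb Z$ be a finite nonempty set whose elements all lie in a single congruence class modulo $m$, and this class is not $0\bmod m$. Then $C=m\mathbb N\cup F$ arises as a minimal additive complement in $\mathbb Z$.
   Context: $\mathbb N=\{0,1,2,\dots\}$ and $m\mathbb N=\{mk:k\in\mathbb N\}$. For $C,W\subseteq\mathbb Z$, $C+W=\{c+w:c\in C,w\in W\}$. $C$ is a minimal additive complement (MAC) to $W$ if $C+W=\mathbb Z$ and no proper subset $C'\subsetneq C$ satisfies $C'+W=\mathbb Z$. $C$ arises as a MAC if there exists $W\subseteq\mathbb Z$ to which $C$ is a MAC. *)

From Stdlib Require Import ZArith List.
Open Scope Z_scope.

Definition sumset_is_Z (C W : Z -> Prop) : Prop :=
  forall z : Z, exists c w, C c /\ W w /\ z = c + w.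

Definition is_MAC (C W : Z -> Prop) : Prop :=
  sumset_is_Z C W /\
  forall C' : Z -> Prop,
    (forall x, C' x -> C x) -> sumset_is_Z C' W -> forall x, C x -> C' x.

Definition arises_as_MAC (C : Z -> Prop) : Prop :=
  exists W : Z -> Prop, is_MAC C W.

Definition mult_nat (m : Z) (x : Z) : Prop := exists k : Z, 0 <= k /\ x = m * k.

From Stdlib Require Import ZArith List Lia Classical.
Open Scope Z_scope.

(* Take [W] to be [0], every residue class mod [m] other than [0] and [-r],
   and the part of the class [-r] below [-fmax] minus a finite forbidden set.
   If [c + w] is a multiple of [m] with [c] in [C] and [w] in [W], then either
   [w = 0] or [c] lies in [F] and [w] in the class [-r].  For [x = m k >= 0]
   the second case is impossible since [c = x - w > fmax].  For each [g] in
   [F], an anchor [a_g], which is a negative multiple of [m], has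
   [g + (a_g - g)] as its only representation, because every [a_g - g'] with
   [g' <> g] is forbidden.  So no element of [C] can be removed.  The
   forbidden set is sparse enough that every negative multiple [z] of [m] is
   still [f + w], with [f] equal to [fmax] or [fmin], or to [g] when
   [z = a_g]. *)

Lemma list_extremes (F : list Z) :
  F <> nil -> exists lo hi, In lo F /\ In hi F /\ forall f, In f F -> lo <= f <= hi.
Proof.
  induction F as [|a F IH]; intros hF; [congruence|].
  destruct F as [|b F].
  - exists a, a. split; [now left|split; [now left|]].
    intros f [<-|[]]; lia.
  - destruct IH as (lo & hi & hlo & hhi & hbetween); [discriminate|].
    exists (Z.min a lo), (Z.max a hi). split; [|split].
    + destruct (Z.min_spec a lo) as [[_ ->]|[_ ->]]; [now left|now right].
    + destruct (Z.max_spec a hi) as [[_ ->]|[_ ->]]; [now right|now left].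
    + intros f [<-|hf]; [lia|]. specialize (hbetween f hf). lia.
Qed.

Section Construction.

Variables (m r : Z) (F : list Z) (fmin fmax : Z).

Hypothesis m_pos : 0 < m.
Hypothesis r_not_multiple : ~ (m | r).
Hypothesis F_class : forall f, In f F -> (m | f - r).
Hypothesis fmin_in : In fmin F.
Hypothesis fmax_in : In fmax F.
Hypothesis F_between : forall f, In f F -> fmin <= f <= fmax.

Definition C (x : Z) : Prop := mult_nat m x \/ In x F.

(* Distinct anchors differ by more than [2 (fmax - fmin)], the largest spread
   of the differences [g' - h'] with [g', h'] in [F]. *)
Definition anchor (g : Z) : Z := m * (2 * (fmax - fmin) + 1) * (g - fmax - 1).

Definition forbidden (x : Z) : Prop :=
  exists g g', In g F /\ In g' F /\ g <> g' /\ x = anchor g - g'.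

Definition complement (x : Z) : Prop :=
  x = 0 \/ (~ (m | x) /\ ~ (m | x + r)) \/
  ((m | x + r) /\ x + fmax < 0 /\ ~ forbidden x).

Lemma anchor_divide (g : Z) : (m | anchor g).
Proof. exists ((2 * (fmax - fmin) + 1) * (g - fmax - 1)). unfold anchor. ring. Qed.

Lemma anchor_upper (g : Z) : In g F -> anchor g + 2 * (fmax - fmin) < 0.
Proof.
  intros hg. pose proof (F_between g hg). pose proof (F_between fmin fmin_in).
  assert (1 <= m * (fmax + 1 - g)) by nia.
  unfold anchor. nia.
Qed.

Lemma anchor_lower (g : Z) :
  In g F -> - (m * (2 * (fmax - fmin) + 1) * (fmax - fmin + 1)) <= anchor g.
Proof.
  intros hg. pose proof (F_between g hg).
  assert (0 <= m * (2 * (fmax - fmin) + 1) * (g - fmin))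
    by (apply Z.mul_nonneg_nonneg; [apply Z.mul_nonneg_nonneg|]; lia).
  unfold anchor. nia.
Qed.

Lemma anchor_separated (g h : Z) :
  In g F -> In h F -> Z.abs (anchor g - anchor h) <= 2 * (fmax - fmin) -> g = h.
Proof.
  intros hg hh hclose. pose proof (F_between g hg). pose proof (F_between h hh).
  replace (anchor g - anchor h) with (m * (2 * (fmax - fmin) + 1) * (g - h))
    in hclose by (unfold anchor; ring).
  destruct (Z.eq_dec g h) as [|hne]; [assumption|].
  assert (hgap : 1 <= Z.abs (g - h)) by lia.
  rewrite !Z.abs_mul, (Z.abs_eq m), (Z.abs_eq (2 * _ + 1)) in hclose by lia.
  nia.
Qed.

Lemma forbidden_upper (x : Z) : forbidden x -> x + fmin + 2 * (fmax - fmin) < 0.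
Proof.
  intros (g & g' & hg & hg' & _ & ->).
  pose proof (anchor_upper g hg). pose proof (F_between g' hg'). lia.
Qed.

Lemma forbidden_lower (x : Z) :
  forbidden x -> - (m * (2 * (fmax - fmin) + 1) * (fmax - fmin + 1)) - fmax <= x.
Proof.
  intros (g & g' & hg & hg' & _ & ->).
  pose proof (anchor_lower g hg). pose proof (F_between g' hg'). lia.
Qed.

Lemma not_forbidden_anchor (g : Z) : In g F -> ~ forbidden (anchor g - g).
Proof.
  intros hg (h & h' & hh & hh' & hne & heq).
  pose proof (F_between g hg). pose proof (F_between h' hh').
  assert (g = h) by (apply anchor_separated; auto; lia).
  subst h. lia.
Qed.

(* Both translates can be forbidden only through the same anchor [a_g], and
   then [g' - h' = fmax - fmin] pins [g' = fmax], so [z = a_g]. *)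
Lemma forbidden_extremes (z : Z) :
  forbidden (z - fmax) -> forbidden (z - fmin) -> exists g, In g F /\ z = anchor g.
Proof.
  intros (g & g' & hg & hg' & _ & hmax) (h & h' & hh & hh' & _ & hmin).
  pose proof (F_between g' hg'). pose proof (F_between h' hh').
  assert (g = h) by (apply anchor_separated; auto; lia).
  subst h. exists g. split; [assumption|lia].
Qed.

Lemma complement_shifted_F (z f : Z) :
  (m | z) -> In f F -> z - f + fmax < 0 -> ~ forbidden (z - f) -> complement (z - f).
Proof.
  intros hz hf hneg hallowed. right; right. split; [|split]; [|assumption..].
  replace (z - f + r) with (z - (f - r)) by ring.
  apply Z.divide_sub_r; auto.
Qed.

Lemma cover_negative_multiple (z : Z) :
  (m | z) -> z < 0 -> exists f, In f F /\ complement (z - f).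
Proof.
  intros hz hneg.
  destruct (classic (forbidden (z - fmax))) as [hfmax|hfmax].
  2: { exists fmax. split; [assumption|]. apply complement_shifted_F; auto; lia. }
  pose proof (forbidden_upper _ hfmax) as hfar.
  destruct (classic (forbidden (z - fmin))) as [hfmin|hfmin].
  2: { exists fmin. split; [assumption|]. apply complement_shifted_F; auto; lia. }
  destruct (forbidden_extremes z hfmax hfmin) as (g & hg & ->).
  pose proof (F_between g hg).
  exists g. split; [assumption|].
  apply complement_shifted_F; auto using anchor_divide, not_forbidden_anchor; lia.
Qed.

Lemma cover_shifted_class (z : Z) :
  (m | z + r) -> exists k, 0 <= k /\ complement (z - m * k).
Proof.
  intros hz.
  set (L := m * (2 * (fmax - fmin) + 1) * (fmax - fmin + 1)).
  assert (hL : 0 <= L).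
  { pose proof (F_between fmin fmin_in).
    apply Z.mul_nonneg_nonneg; [apply Z.mul_nonneg_nonneg|]; lia. }
  set (k := Z.abs z + L + Z.abs fmax + 1).
  assert (k <= m * k) by (assert (0 <= k) by lia; nia).
  assert (hfar : z - m * k < - L - fmax) by lia.
  exists k. split; [lia|]. right; right. split; [|split].
  - replace (z - m * k + r) with (z + r - m * k) by ring.
    apply Z.divide_sub_r; [assumption|]. now exists k; rewrite Z.mul_comm.
  - lia.
  - intros hforb. pose proof (forbidden_lower _ hforb). unfold L in hfar. lia.
Qed.

Lemma C_complement_sumset : sumset_is_Z C complement.
Proof.
  intros z. destruct (classic (m | z)) as [hz|hz].
  - destruct (Z_lt_le_dec z 0) as [hneg|hnonneg].
    + destruct (cover_negative_multiple z hz hneg) as (f & hf & hw).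
      exists f, (z - f). split; [now right|split; [assumption|ring]].
    + destruct hz as [k ->]. exists (k * m), 0.
      split; [left; exists k; split; [nia|ring]|split; [now left|ring]].
  - destruct (classic (m | z + r)) as [hzr|hzr].
    + destruct (cover_shifted_class z hzr) as (k & hk & hw).
      exists (m * k), (z - m * k).
      split; [left; now exists k|split; [assumption|ring]].
    + exists 0, z. split; [left; exists 0; split; lia|split; [|ring]].
      right; left. auto.
Qed.

Lemma complement_partner (c w : Z) :
  C c -> complement w -> (m | c + w) ->
  (mult_nat m c /\ w = 0) \/ (In c F /\ w + fmax < 0 /\ ~ forbidden w).
Proof.
  intros [hc|hc] hw hsum.
  - assert (hcm : (m | c))
      by (destruct hc as (k & _ & ->); now exists k; rewrite Z.mul_comm).
    destruct hw as [->|[[hw _]|[hwr _]]]; [now left|exfalso..].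
    + apply hw. replace w with (c + w - c) by ring. now apply Z.divide_sub_r.
    + apply r_not_multiple. replace r with (w + r - (c + w - c)) by ring.
      apply Z.divide_sub_r; [assumption|]. now apply Z.divide_sub_r.
  - pose proof (F_class c hc) as hcr.
    destruct hw as [->|[[_ hw]|(_ & hneg & hallowed)]].
    + exfalso. apply r_not_multiple. replace r with (c + 0 - (c - r)) by ring.
      now apply Z.divide_sub_r.
    + exfalso. apply hw. replace (w + r) with (c + w - (c - r)) by ring.
      now apply Z.divide_sub_r.
    + right. auto.
Qed.

Lemma multiple_repr_unique (c w k : Z) :
  C c -> complement w -> 0 <= k -> c + w = m * k -> c = m * k.
Proof.
  intros hc hw hk hsum.
  assert (hdiv : (m | c + w)) by (rewrite hsum; now exists k; rewrite Z.mul_comm).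
  destruct (complement_partner c w hc hw hdiv) as [[_ ->]|(hcF & hneg & _)]; [lia|].
  pose proof (F_between c hcF). nia.
Qed.

Lemma anchor_repr_unique (c w g : Z) :
  In g F -> C c -> complement w -> c + w = anchor g -> c = g.
Proof.
  intros hg hc hw hsum.
  assert (hdiv : (m | c + w)) by (rewrite hsum; apply anchor_divide).
  pose proof (anchor_upper g hg). pose proof (F_between fmin fmin_in).
  destruct (complement_partner c w hc hw hdiv)
    as [[(k & hk & ->) ->]|(hcF & _ & hallowed)]; [nia|].
  destruct (Z.eq_dec c g) as [|hne]; [assumption|].
  exfalso. apply hallowed. exists g, c. repeat split; auto. lia.
Qed.

Lemma C_minimal_complement : is_MAC C complement.
Proof.
  split; [exact C_complement_sumset|].
  intros C' hsub hcov x [(k & hk & ->)|hx].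
  - destruct (hcov (m * k)) as (c & w & hc & hw & hsum).
    rewrite <- (multiple_repr_unique c w k (hsub c hc) hw hk (eq_sym hsum)).
    exact hc.
  - destruct (hcov (anchor x)) as (c & w & hc & hw & hsum).
    rewrite <- (anchor_repr_unique c w x hx (hsub c hc) hw (eq_sym hsum)).
    exact hc.
Qed.

End Construction.

Theorem proposition2 (m : Z) (F : list Z) (r : Z) :
  2 <= m ->
  F <> nil ->
  r mod m <> 0 ->
  (forall f, In f F -> f mod m = r mod m) ->
  arises_as_MAC (fun x => mult_nat m x \/ In x F).
Proof.
  intros hm hF hr hFr.
  destruct (list_extremes F hF) as (fmin & fmax & hmin & hmax & hbetween).
  exists (complement m r F fmin fmax).
  apply C_minimal_complement; auto; [lia| |].
  - intros hdiv. apply hr. apply Z.mod_divide; [lia|assumption].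
  - intros f hf. apply Z.mod_divide; [lia|]. now apply Z.cong_iff_0, hFr.
Qed.
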